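(* Let $k\ge 1$ and $1\le k^*\le k$ be integers. For $r\in\{1,2\}$, run the Reduce-By-Median-Counter algorithm (defined in the context) with parameters $k,k^*$ on a weighted stream $\sigma_r$ of weighted length $N_r$, producing summary $S_r$. Let $\sigma=\sigma_1\circ\sigma_2$ be the concatenated stream, $N=N_1+N_2$, and $f_i$ the frequency of item $i$ in $\sigma$. Apply the merge procedure: for each item $i$ assigned a counter $c_2(i)$ in $S_2$ (in any order), call Update$(i,c_2(i))$ on $S_1$. Let $C$ be the sum of the counter values of the resulting summary and $\hat f_i$ its output of Estimate$(i)$. Then for every $i\in[m]$, $$0\le f_i-\hat f_i\le\frac{N-C}{k^*},$$ and moreover for every integer $0\le j<k^*$, $$0\le f_i-\hat f_i\le\frac{N^{\mathrm{res}(j)}}{k^*-j},$$ where $N^{\mathrm{res}(j)}$ is computed for $\sigma$.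
   Context: A weighted stream over the universe $[m]=\{1,\dots,m\}$ is a sequence of updates $(i_t,\Delta_t)$ with $i_t\in[m]$ and real weights $\Delta_t>0$; its weighted length is $\sum_t\Delta_t$. The frequency of $i$ in a stream is the sum of $\Delta_t$ over updates with $i_t=i$. $N^{\mathrm{res}(j)}$ denotes the sum of the frequencies of all items except the $j$ items of largest frequency (ties broken arbitrarily). The Reduce-By-Median-Counter algorithm with integer parameters $k\ge 1$ and $1\le k^*\le k$ maintains a set $T\subseteq[m]$ of at most $k$ items, each $j\in T$ carrying a nonnegative real counter $c(j)$; initially $T=\emptyset$. Update$(i,\Delta)$: if $i\in T$, set $c(i)\gets c(i)+\Delta$; else if $|T|<k$, add $i$ to $T$ with $c(i)=\Delta$; else call DecrementCounters(), and afterwards, if $\Delta\ge c_{k^*}$, add $i$ to $T$ with $c(i)=\Delta-c_{k^*}$. DecrementCounters(): let $c_{k^*}$ be the $k^*$-th largest value, counting multiplicity, of the multiset $\{c(j): j\in T\}$; for every $j\in T$ set $c(j)\gets c(j)-c_{k^*}$, and remove $j$ from $T$ if now $c(j)\le 0$. Estimate$(i)$ returns $c(i)$ if $i\in T$ and $0$ otherwise. *)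

From HB Require Import structures.
From mathcomp Require Import all_boot all_order all_algebra.
Set Implicit Arguments. Unset Strict Implicit. Unset Printing Implicit Defensive.
Import Order.TTheory GRing.Theory Num.Theory.
Local Open Scope ring_scope.

Section RBM.
Variables (R : realFieldType) (m : nat).

(* A summary: the set T of tracked items and their counters c (values of c
   outside T are irrelevant). *)
Record summary := Summary { sT : {set 'I_m}; sc : 'I_m -> R }.

Definition empty_summary : summary := Summary set0 (fun _ => 0).

Definition kth_largest (kstar : nat) (S : summary) : R :=
  nth 0 (sort (fun x y : R => y <= x) [seq sc S j | j <- enum (sT S)]) kstar.-1.

Definition setc (c : 'I_m -> R) (i : 'I_m) (v : R) : 'I_m -> R :=
  fun j => if j == i then v else c j.

Definition decrement (ck : R) (S : summary) : summary :=
  Summary [set j in sT S | 0 < sc S j - ck] (fun j => sc S j - ck).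

Definition update (k kstar : nat) (S : summary) (i : 'I_m) (d : R) : summary :=
  if i \in sT S then Summary (sT S) (setc (sc S) i (sc S i + d))
  else if (#|sT S| < k)%N then Summary (i |: sT S) (setc (sc S) i d)
  else
    let ck := kth_largest kstar S in
    let S' := decrement ck S in
    if ck <= d then Summary (i |: sT S') (setc (sc S') i (d - ck))
    else S'.

Definition estimate (S : summary) (i : 'I_m) : R :=
  if i \in sT S then sc S i else 0.

Definition counter_sum (S : summary) : R := \sum_(j in sT S) sc S j.

Definition stream := seq ('I_m * R).

Definition weighted_stream (s : stream) : Prop := all (fun u => 0 < u.2) s.

Definition rbm_run (k kstar : nat) (s : stream) : summary :=
  foldl (fun S u => update k kstar S u.1 u.2) empty_summary s.

Definition wlength (s : stream) : R := \sum_(u <- s) u.2.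

Definition freq (s : stream) (i : 'I_m) : R := \sum_(u <- s | u.1 == i) u.2.

Definition Nres (s : stream) (j : nat) : R :=
  \sum_(x <- drop j (sort (fun x y : R => y <= x) [seq freq s i | i <- enum 'I_m])) x.

Definition rbm_merge (k kstar : nat) (S1 S2 : summary) (ord : seq 'I_m) : summary :=
  foldl (fun S i => update k kstar S i (sc S2 i)) S1 ord.

End RBM.

(** Let D be the total amount subtracted by the calls to DecrementCounters.
    Every estimate underestimates its frequency by at most D, and for every
    set H of items the errors outside H sum to at least (k* - |H|) D, because
    a decrement by c_{k*} charges the full amount c_{k*} to the at least k*
    items whose counter is >= c_{k*}.  The merge feeds the counters of S2 into
    S1 as a stream, so both the errors and the budgets D of the two stages
    simply add.  Taking H = {}, resp. H = the j heaviest items, bounds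
    k* D by N - C, resp. (k* - j) D by N^res(j). *)

From HB Require Import structures.
From mathcomp Require Import all_boot all_order all_algebra.
From mathcomp Require Import lra zify.
Import Order.TTheory GRing.Theory Num.Theory.
Set Implicit Arguments. Unset Strict Implicit. Unset Printing Implicit Defensive.
Local Open Scope ring_scope.

Lemma sum_notin_ge (R : numDomainType) (T : finType) (n : nat) (d : T -> R) e
    (A : {set T}) :
  (forall x, 0 <= d x) -> (forall x, x \in A -> e <= d x) -> 0 <= e ->
  (n <= #|A|)%N ->
  forall H : {set T}, (n - #|H|)%:R * e <= \sum_(x | x \notin H) d x.
Proof.
move=> d_ge0 dA e_ge0 nA H.
have le_card : (n - #|H| <= #|A :\: H|)%N.
  by rewrite cardsD; have /subset_leq_card := subsetIr A H; lia.
apply: (@le_trans _ _ (\sum_(x in A :\: H) d x)).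
  apply: (le_trans (ler_wpM2r e_ge0 (_ : _ <= #|A :\: H|%:R))); first by rewrite ler_nat.
  by rewrite mulr_natl -sumr_const; apply: ler_sum => x /setDP[/dA].
have -> : \sum_(x in A :\: H) d x = \sum_(x | (x \notin H) && (x \in A)) d x.
  by apply: eq_bigl => x; rewrite in_setD andbC.
by rewrite [X in _ <= X](bigID (mem A)) /= lerDl sumr_ge0.
Qed.

Section KthLargest.
Variable R : realDomainType.
Implicit Types (s : seq R) (n : nat).

Local Notation sort_ge := (sort (fun x y : R => y <= x)).

Lemma nth_sort_ge_mem s n : (n < size s)%N -> nth 0 (sort_ge s) n \in s.
Proof. by move=> lt_ns; rewrite -(mem_sort (fun x y : R => y <= x)) mem_nth // size_sort. Qed.

Lemma count_ge_nth_sort_ge s n :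
  (n < size s)%N -> (n.+1 <= count (fun y => nth 0%R (sort_ge s) n <= y)%R s)%N.
Proof.
move=> lt_ns; set t := sort_ge s.
have size_t : size t = size s by rewrite size_sort.
have sorted_t : sorted (fun x y : R => y <= x) t.
  by apply: sort_sorted => x y; exact: le_total.
have ge_take : all (fun y => nth 0 t n <= y) (take n.+1 t).
  apply/(all_nthP 0) => p; rewrite size_takel ?size_t // => lt_p.
  have le_pn : (p <= n)%N by lia.
  rewrite nth_take; last by lia.
  apply: (sorted_leq_nth (fun a b c h1 h2 => le_trans h2 h1) (fun a => lexx a) 0 sorted_t);
  by rewrite ?inE ?size_t //; lia.
have /permP <- : perm_eq t s by rewrite perm_sort.
set P := (fun y => _ <= y); rewrite -(cat_take_drop n.+1 t) count_cat.
by move: ge_take; rewrite all_count => /eqP ->; rewrite size_takel ?size_t //; lia.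
Qed.

End KthLargest.

Section Accounting.
Variables (R : realFieldType) (m : nat).
Implicit Types (s : stream R m) (S : summary R m).

Lemma freq_cat s1 s2 x : freq (s1 ++ s2) x = freq s1 x + freq s2 x.
Proof. exact: big_cat. Qed.

Lemma wlength_cat s1 s2 : wlength (s1 ++ s2) = wlength s1 + wlength s2.
Proof. exact: big_cat. Qed.

Lemma sum_freq s : \sum_x freq s x = wlength s.
Proof.
rewrite /freq /wlength; under eq_bigr do rewrite big_mkcond.
rewrite exchange_big /=; apply: eq_bigr => u _.
by rewrite -big_mkcond /=; apply: (big_pred1 u.1) => x /=; exact: eq_sym.
Qed.

Lemma sum_estimate S : \sum_x estimate S x = counter_sum S.
Proof. by rewrite /counter_sum [RHS]big_mkcond. Qed.

Lemma Nres_sum_notin s j :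
  exists H : {set 'I_m}, (#|H| <= j)%N /\ Nres s j = \sum_(x | x \notin H) freq s x.
Proof.
rewrite /Nres sort_map -map_drop big_map.
set E := sort _ (enum 'I_m).
have perm_E : perm_eq E (enum 'I_m) by rewrite perm_sort.
have uniq_E : uniq E by rewrite (perm_uniq perm_E) enum_uniq.
exists [set x in take j E]; split.
  by rewrite cardsE; apply: leq_trans (card_size _) _; rewrite size_take_min geq_minl.
have -> : \sum_(x | x \notin [set x in take j E]) freq s x =
          \sum_(x <- E | x \notin [set x in take j E]) freq s x.
  by rewrite (perm_big _ perm_E) big_enum_cond.
rewrite -{2}(cat_take_drop j E) big_cat /=.
rewrite [X in _ = X + _]big1_seq ?add0r; last first.
  by move=> x /andP[]; rewrite inE => /negbTE ->.
move: uniq_E; rewrite -{1}(cat_take_drop j E) cat_uniq => /and3P[_ take_drop_disj _].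
rewrite big_seq [RHS]big_seq_cond; apply: eq_bigl => x.
case x_drop : (x \in drop j E) => //=; rewrite inE.
by have := hasPn take_drop_disj x x_drop.
Qed.

Lemma freq_counter_stream S ord x :
  perm_eq ord (enum (sT S)) -> freq [seq (i, sc S i) | i <- ord] x = estimate S x.
Proof.
move=> ord_T; rewrite /freq big_map (perm_big _ ord_T) /= /estimate.
case: (boolP (x \in sT S)) => xT.
  by rewrite -big_filter filter_pred1_uniq ?enum_uniq ?mem_enum // big_seq1.
by rewrite big1_seq // => y /andP[/eqP ->]; rewrite mem_enum (negbTE xT).
Qed.

Lemma rbm_mergeE k kstar S1 S2 ord :
  rbm_merge k kstar S1 S2 ord =
  foldl (fun S u => update k kstar S u.1 u.2) S1 [seq (i, sc S2 i) | i <- ord].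
Proof. by elim: ord S1 => //= i ord IH S1; rewrite -IH. Qed.

End Accounting.

Section Invariant.
Variables (R : realFieldType) (m kstar : nat).
Implicit Types (D d : R) (g f : 'I_m -> R) (H : {set 'I_m}).

Definition add_at g (i : 'I_m) d : 'I_m -> R :=
  fun x => g x + (if i == x then d else 0).

(* Only the estimates of a summary matter, so the invariant relates an estimate
   function f to the true frequencies g.  The last clause is vacuous once
   #|H| >= kstar (truncated subtraction). *)
Record err_inv D g f : Prop := ErrInv {
  err_inv_D_ge0 : 0 <= D;
  err_inv_est_ge0 : forall x, 0 <= f x;
  err_inv_est_le : forall x, f x <= g x;
  err_inv_err_le : forall x, g x - f x <= D;
  err_inv_sum_ge : forall H, (kstar - #|H|)%:R * D <= \sum_(x | x \notin H) (g x - f x)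
}.

Lemma err_inv_ext D g g' f f' :
  g =1 g' -> f =1 f' -> err_inv D g f -> err_inv D g' f'.
Proof.
move=> eq_g eq_f [D_ge0 f_ge0 f_le err_le sum_ge]; split=> [||x|x|H] //.
- by move=> x; rewrite -eq_f.
- by rewrite -eq_f -eq_g.
- by rewrite -eq_f -eq_g.
- by under eq_bigr do rewrite -eq_g -eq_f.
Qed.

Lemma err_inv0 : err_inv 0 (fun=> 0) (fun=> 0).
Proof. by split=> [||x|x|H]; rewrite ?subrr ?mulr0 ?big1 // => x _; rewrite subrr. Qed.

Lemma err_inv_add_at D g f i d :
  0 <= d -> err_inv D g f -> err_inv D (add_at g i d) (add_at f i d).
Proof.
move=> d_ge0 [D_ge0 f_ge0 f_le err_le sum_ge].
have err_eq x : add_at g i d x - add_at f i d x = g x - f x.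
  by rewrite /add_at opprD addrACA subrr addr0.
split=> [||x|x|H] //.
- by move=> x; rewrite /add_at addr_ge0 //; case: ifP.
- by rewrite /add_at lerD2r.
- by rewrite err_eq.
- by under eq_bigr do rewrite err_eq.
Qed.

Lemma err_inv_cut D g f (c : R) :
  0 <= c -> (kstar <= #|[set x | (c <= f x)%R]|)%N -> err_inv D g f ->
  err_inv (D + c) g (fun x => Num.max (f x - c) 0).
Proof.
move=> c_ge0 many [D_ge0 f_ge0 f_le err_le sum_ge].
have cut_ge0 x : 0 <= Num.max (f x - c) 0 by rewrite le_max lexx orbT.
have cut_le x : Num.max (f x - c) 0 <= f x by rewrite ge_max f_ge0 andbT gerBl.
have charge_le x : f x - Num.max (f x - c) 0 <= c.
  by rewrite lerBlDl -lerBlDr le_max lexx.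
split=> [||x|x|H].
- exact: addr_ge0 D_ge0 c_ge0.
- exact: cut_ge0.
- exact: le_trans (cut_le x) (f_le x).
- by have := lerD (err_le x) (charge_le x); rewrite addrA subrK.
have -> : \sum_(x | x \notin H) (g x - Num.max (f x - c) 0) =
          \sum_(x | x \notin H) (g x - f x) + \sum_(x | x \notin H) (f x - Num.max (f x - c) 0).
  by rewrite -big_split /=; apply: eq_bigr => x _; rewrite addrA subrK.
rewrite mulrDr; apply: lerD; first exact: sum_ge.
apply: sum_notin_ge c_ge0 many H => [x|x].
  by rewrite subr_ge0.
by rewrite inE => le_cf; rewrite max_l ?subr_ge0 // opprB addrC subrK.
Qed.

(* Errors add up along a chain: h summarises g2, and f summarises g1 + h. *)
Lemma err_inv_chain D1 D2 g1 g2 h f :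
  err_inv D1 (fun x => g1 x + h x) f -> err_inv D2 g2 h ->
  err_inv (D1 + D2) (fun x => g1 x + g2 x) f.
Proof.
move=> [D1_ge0 f_ge0 f_le err1_le sum1_ge] [D2_ge0 _ h_le err2_le sum2_ge].
have err_split x : g1 x + g2 x - f x = (g1 x + h x - f x) + (g2 x - h x).
  by lra.
split=> [||x|x|H].
- exact: addr_ge0 D1_ge0 D2_ge0.
- exact: f_ge0.
- by apply: le_trans (f_le x) _; rewrite lerD2l.
- by rewrite err_split; apply: lerD.
- by under eq_bigr do rewrite err_split; rewrite big_split mulrDr; apply: lerD.
Qed.

Lemma err_inv_err_le_sum D g f H (n : nat) x :
  err_inv D g f -> (0 < n)%N -> (n + #|H| <= kstar)%N ->
  g x - f x <= (\sum_(y | y \notin H) (g y - f y)) / n%:R.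
Proof.
move=> I n_gt0 le_nH; rewrite ler_pdivlMr ?ltr0n // mulrC.
apply: le_trans (err_inv_sum_ge I H).
apply: le_trans (ler_wpM2l (ler0n _ n) (err_inv_err_le I x)) _.
by rewrite ler_wpM2r ?(err_inv_D_ge0 I) // ler_nat; lia.
Qed.

End Invariant.

Section Algorithm.
Variables (R : realFieldType) (m k kstar : nat).
Hypotheses (kstar_gt0 : (0 < kstar)%N) (kstar_le_k : (kstar <= k)%N).
Implicit Types (S : summary R m) (D d : R) (g : 'I_m -> R).

Lemma counter_ge0 S x : (forall y, 0 <= estimate S y) -> x \in sT S -> 0 <= sc S x.
Proof. by move=> est_ge0 xT; have := est_ge0 x; rewrite /estimate xT. Qed.

Lemma kth_largest_ge0 S :
  (forall x, 0 <= estimate S x) -> (kstar <= #|sT S|)%N -> 0 <= kth_largest kstar S.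
Proof.
move=> est_ge0 card_T; rewrite /kth_largest.
have [|x xT ->] := mapP (nth_sort_ge_mem (s := [seq sc S j | j <- enum (sT S)]) (n := kstar.-1) _).
  by rewrite size_map -cardE prednK.
by apply: counter_ge0; rewrite // -mem_enum.
Qed.

Lemma kth_largest_count S :
  (kstar <= #|sT S|)%N ->
  (kstar <= #|[set x | (kth_largest kstar S <= estimate S x)%R]|)%N.
Proof.
move=> card_T; rewrite /kth_largest; set s := [seq sc S j | j <- enum (sT S)].
have lt_pred : (kstar.-1 < size s)%N by rewrite size_map -cardE prednK.
rewrite -[X in (X <= _)%N](prednK kstar_gt0).
apply: leq_trans (count_ge_nth_sort_ge lt_pred) _; rewrite count_map.
rewrite -size_filter -(card_uniqP (filter_uniq _ (enum_uniq (mem (sT S))))).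
apply/subset_leq_card/subsetP => x; rewrite mem_filter mem_enum.
by case/andP => le_cx xT; rewrite inE /estimate xT.
Qed.

Lemma estimate_decrement (c : R) S x :
  0 <= c -> estimate (decrement c S) x = Num.max (estimate S x - c) 0.
Proof.
move=> c_ge0; rewrite /estimate /decrement /= inE.
case: (x \in sT S) => /=; last by rewrite max_r // sub0r oppr_le0.
by case: ltrP.
Qed.

Lemma estimate_update_add_at S i d x :
  (i \in sT S) || (#|sT S| < k)%N ->
  estimate (update k kstar S i d) x = add_at (estimate S) i d x.
Proof.
rewrite /update; case: ifP => [iT _ | iT /= lt_k]; rewrite ?lt_k;
  rewrite /add_at /estimate /setc /= ?in_setU1 eq_sym;
  by case: (eqVneq x i) => [->|_]; rewrite ?iT ?addr0 ?add0r.
Qed.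

Lemma estimate_update_cut S i d x :
  i \notin sT S -> ~~ (#|sT S| < k)%N -> 0 <= kth_largest kstar S ->
  estimate (update k kstar S i d) x =
  Num.max (add_at (estimate S) i d x - kth_largest kstar S) 0.
Proof.
move=> iT full; rewrite /update (negbTE iT) (negbTE full) /=.
set c := kth_largest kstar S => c_ge0.
have est_i : estimate S i = 0 by rewrite /estimate (negbTE iT).
rewrite /add_at; case: (eqVneq i x) => [<- | ix].
  rewrite est_i add0r; case: ifP => le_cd.
    by rewrite /estimate /setc /= setU11 eqxx max_l ?subr_ge0.
  rewrite max_r; last by rewrite subr_le0 ltW // ltNge le_cd.
  by rewrite /estimate /decrement /= inE (negbTE iT).
rewrite addr0 -estimate_decrement //; case: ifP => // _.
by rewrite /estimate /setc /= in_setU1 eq_sym (negbTE ix).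
Qed.

Lemma err_inv_update D g S i d :
  0 <= d -> err_inv kstar D g (estimate S) ->
  exists D', err_inv kstar D' (add_at g i d) (estimate (update k kstar S i d)).
Proof.
move=> d_ge0 I; case: (boolP ((i \in sT S) || (#|sT S| < k)%N)) => [no_decr | ].
  exists D; apply: err_inv_ext (frefl _) _ (err_inv_add_at i d_ge0 I) => x.
  by rewrite estimate_update_add_at.
rewrite negb_or => /andP[iT full].
have card_T : (kstar <= #|sT S|)%N by move: full; rewrite -leqNgt; lia.
have c_ge0 := kth_largest_ge0 (err_inv_est_ge0 I) card_T.
exists (D + kth_largest kstar S).
apply: err_inv_ext (frefl _) _ (err_inv_cut c_ge0 _ (err_inv_add_at i d_ge0 I)).
  by move=> x; rewrite estimate_update_cut.
apply: leq_trans (kth_largest_count card_T) (subset_leq_card _).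
apply/subsetP => x; rewrite !inE => /le_trans; apply.
by rewrite /add_at lerDl; case: ifP.
Qed.

Lemma err_inv_foldl_update D g S (s : stream R m) :
  all (fun u => 0 <= u.2) s -> err_inv kstar D g (estimate S) ->
  exists D', err_inv kstar D' (fun x => g x + freq s x)
                 (estimate (foldl (fun S u => update k kstar S u.1 u.2) S s)).
Proof.
elim: s D g S => [|u s IH] D g S /=.
  by move=> _ I; exists D; apply: err_inv_ext _ (frefl _) I => x; rewrite /freq big_nil addr0.
move=> /andP[u_ge0 s_ge0] I.
have [D1 I1] := err_inv_update u.1 u_ge0 I.
have [D2 I2] := IH _ _ _ s_ge0 I1.
exists D2; apply: err_inv_ext _ (frefl _) I2 => x.
by rewrite /add_at /freq big_cons; case: (u.1 == x); rewrite ?add0r ?addr0 ?addrA.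
Qed.

Lemma err_inv_run (s : stream R m) :
  weighted_stream s -> exists D, err_inv kstar D (freq s) (estimate (rbm_run k kstar s)).
Proof.
move=> s_pos.
have I0 : err_inv kstar 0 (fun=> 0) (estimate (empty_summary R m)).
  by apply: err_inv_ext (frefl _) _ (err_inv0 R m kstar) => x; rewrite /estimate inE.
have [D I] := err_inv_foldl_update (sub_all (fun u => @ltW _ _ 0 u.2) s_pos) I0.
by exists D; apply: err_inv_ext _ (frefl _) I => x; rewrite add0r.
Qed.

Lemma err_inv_merge (s1 s2 : stream R m) ord :
  weighted_stream s1 -> weighted_stream s2 ->
  perm_eq ord (enum (sT (rbm_run k kstar s2))) ->
  exists D, err_inv kstar D (freq (s1 ++ s2))
    (estimate (rbm_merge k kstar (rbm_run k kstar s1) (rbm_run k kstar s2) ord)).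
Proof.
move=> s1_pos s2_pos ord_T; set S2 := rbm_run k kstar s2.
have [D1 I1] := err_inv_run s1_pos.
have [D2 I2] := err_inv_run s2_pos.
have counters_ge0 : all (fun u => 0 <= u.2) [seq (i, sc S2 i) | i <- ord].
  rewrite all_map; apply/allP => i; rewrite (perm_mem ord_T) mem_enum.
  exact: counter_ge0 (err_inv_est_ge0 I2).
have [D I] := err_inv_foldl_update counters_ge0 I1.
exists (D + D2); apply: err_inv_ext (fun x => esym (freq_cat s1 s2 x)) _ (err_inv_chain _ I2).
  by move=> x; rewrite rbm_mergeE.
by apply: err_inv_ext _ (frefl _) I => x; rewrite freq_counter_stream.
Qed.

End Algorithm.

Theorem theorem9 (R : realFieldType) (m k kstar : nat)
  (s1 s2 : stream R m) (ord : seq 'I_m) :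
  (1 <= k)%N -> (1 <= kstar)%N -> (kstar <= k)%N ->
  weighted_stream s1 -> weighted_stream s2 ->
  perm_eq ord (enum (sT (rbm_run k kstar s2))) ->
  let S := rbm_merge k kstar (rbm_run k kstar s1) (rbm_run k kstar s2) ord in
  let s := s1 ++ s2 in
  let N := wlength s1 + wlength s2 in
  let C := counter_sum S in
  forall i : 'I_m,
    0 <= freq s i - estimate S i /\
    freq s i - estimate S i <= (N - C) / kstar%:R /\
    (forall j : nat, (j < kstar)%N ->
       freq s i - estimate S i <= Nres s j / (kstar - j)%:R).
Proof.
move=> _ kstar_gt0 kstar_le_k s1_pos s2_pos ord_T S s N C i.
have [D I] := err_inv_merge kstar_gt0 kstar_le_k s1_pos s2_pos ord_T.
have total_err : \sum_(x | x \notin set0) (freq s x - estimate S x) = N - C.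
  rewrite (eq_bigl xpredT) => [|x]; last by rewrite inE.
  by rewrite sumrB sum_freq sum_estimate wlength_cat.
split; first by rewrite subr_ge0 (err_inv_est_le I).
split; first by rewrite -total_err (err_inv_err_le_sum _ I) // cards0 addn0.
move=> j lt_j; have [H [card_H ->]] := Nres_sum_notin s j.
apply: le_trans (err_inv_err_le_sum (H := H) (n := kstar - j) i I _ _) _;
  [by rewrite subn_gt0 | lia |].
rewrite ler_wpM2r ?invr_ge0 ?ler0n //; apply: ler_sum => x _.
by rewrite gerDl oppr_le0 (err_inv_est_ge0 I).
Qed.
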